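(* Let $\Omega\subset\mathbb{R}^{+}$ be measurable and $\nu\ge0$. Then $\Omega$ is $\mu_\nu$-thick if and only if $\Omega$ is thick.
   Context: Let $d\mu_\nu(y)=y^{2\nu+1}dy$ on $\mathbb{R}^{+}$. A measurable $\Omega\subset\mathbb{R}^{+}$ is $\mu_\nu$-thick if there exist $r>0$, $L>0$ with $\mu_\nu(\Omega\cap[x,x+L])\ge r\,\mu_\nu([x,x+L])$ for all $x\ge0$. It is thick if there exist $\gamma>0$, $L>0$ with $|\Omega\cap[x,x+L]|\ge\gamma L$ for all $x\ge0$ ($|\cdot|$ = Lebesgue measure). *)

From mathcomp Require Import all_boot all_order all_algebra.
From mathcomp Require Import all_classical all_reals all_analysis.
Set Implicit Arguments. Unset Strict Implicit. Unset Printing Implicit Defensive.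
Import Order.TTheory GRing.Theory Num.Theory.
Local Open Scope classical_set_scope.
Local Open Scope ring_scope.

(* The type R equipped with the sigma-algebra of Lebesgue-measurable sets
   (the Caratheodory / completed sigma-algebra of Lebesgue measure). *)
Definition LebR (R : realType) :=
  caratheodory_type (R := R) (wlength (R := R) idfun)^*%mu.

Definition Lmeasurable {R : realType} (A : set R) : Prop :=
  measurable (A : set (LebR R)).

Definition leb {R : realType} (A : set R) : \bar R :=
  @completed_lebesgue_measure R A.

Definition mu_nu {R : realType} (nu : R) (A : set R) : \bar R :=
  (\int[@completed_lebesgue_measure R]_(y in (A : set (LebR R)))
      (y `^ (2 * nu + 1))%:E)%E.

Definition mu_thick {R : realType} (nu : R) (Omega : set R) : Prop :=
  exists r : R, exists L : R, 0 < r /\ 0 < L /\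
    forall x : R, 0 <= x ->
      (r%:E * mu_nu nu [set` `[x, x + L]%R] <= mu_nu nu (Omega `&` [set` `[x, x + L]%R]))%E.

Definition thick {R : realType} (Omega : set R) : Prop :=
  exists gamma : R, exists L : R, 0 < gamma /\ 0 < L /\
    forall x : R, 0 <= x ->
      ((gamma * L)%:E <= leb (Omega `&` [set` `[x, x + L]%R]))%E.

From mathcomp Require Import all_boot all_order all_algebra.
From mathcomp Require Import all_classical all_reals all_analysis.
From mathcomp Require Import measurable_realfun lra ring.
Set Implicit Arguments. Unset Strict Implicit. Unset Printing Implicit Defensive.
Import Order.TTheory GRing.Theory Num.Theory.
Local Open Scope classical_set_scope.
Local Open Scope ring_scope.

(** On a window [[x, x + 2L]] with [x >= 0] the density [y ^ a], [a = 2 nu + 1],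
    is at least [c = (x + L) ^ a] on the right half [[x + L, x + 2L]] and at most
    [(x + 2L) ^ a <= 2 ^ a c] on the whole window, so there [mu_nu] is comparable
    to [c] times Lebesgue measure up to the factor [2 ^ a].  Applying either
    thickness condition at [x + L] with window [L] and enlarging the right half to
    the whole window gives the other condition with window [2L] and constant
    divided by [2 ^ (a + 1)]. *)

Section lebesgue_measurable.
Variable R : realType.

Lemma Lmeasurable_borel (A : set R) : measurable A -> Lmeasurable A.
Proof. exact: sub_caratheodory. Qed.

Lemma Lmeasurable_itv (i : interval R) : Lmeasurable [set` i].
Proof. by apply: Lmeasurable_borel; exact: measurable_itv. Qed.

Lemma Lmeasurable_setI_itv (A : set R) (i : interval R) :
  Lmeasurable A -> Lmeasurable (A `&` [set` i]).
Proof. by move=> mA; apply: measurableI => //; exact: Lmeasurable_itv. Qed.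

Lemma measurable_fun_LebR (D : set (LebR R)) (f : R -> \bar R) :
  measurable_fun [set: R] f -> measurable_fun D f.
Proof.
move=> mf mD Y mY; apply: measurableI => //.
by apply: Lmeasurable_borel; rewrite -[_ @^-1` _]setTI; exact: mf.
Qed.

Lemma leb_itv_cc (x y : R) : x <= y -> leb [set` `[x, y]] = (y - x)%:E.
Proof.
rewrite le_eqVlt => /predU1P[<-|xy];
  by rewrite /leb [X in X = _]lebesgue_measure_itv /= lte_fin ?ltxx ?subrr ?xy ?EFinB.
Qed.

End lebesgue_measurable.

Lemma ler_powR_double (R : realType) (a y z : R) :
  0 <= a -> 0 <= y -> y <= 2 * z -> y `^ a <= 2 `^ a * z `^ a.
Proof.
move=> a0 y0 yz; rewrite -powRM //; last by lra.
by apply: ge0_ler_powR; rewrite ?nnegrE //; lra.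
Qed.

Lemma itv_window_sub (R : realType) (x L : R) : 0 <= L ->
  [set` `[x + L, x + L + L]] `<=` [set` `[x, x + 2 * L]].
Proof. by move=> L0; apply: subset_itv; rewrite bnd_simp; lra. Qed.

Section mu_nu_bounds.
Variables (R : realType) (nu : R).
Hypothesis a_ge0 : 0 <= 2 * nu + 1.
Local Notation a := (2 * nu + 1).

Lemma le_mu_nu (A B : set R) : Lmeasurable A -> Lmeasurable B -> A `<=` B ->
  (mu_nu nu A <= mu_nu nu B)%E.
Proof.
move=> mA mB AB; apply: ge0_subset_integral => //.
  exact/measurable_fun_LebR/measurableT_comp.
by move=> y _; rewrite lee_fin powR_ge0.
Qed.

Lemma mu_nu_ge_leb (u v : R) (D : set R) :
  0 <= u -> Lmeasurable D -> D `<=` [set` `[u, v]] ->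
  ((u `^ a)%:E * leb D <= mu_nu nu D)%E.
Proof.
move=> u0 mD Duv; rewrite /leb -integral_cst //.
apply: ge0_le_integral => //.
- by move=> y _; rewrite lee_fin powR_ge0.
- exact/measurable_fun_LebR/measurableT_comp.
move=> y /Duv; rewrite /= in_itv /= => /andP[uy _].
by rewrite lee_fin ge0_ler_powR // nnegrE //; exact: le_trans uy.
Qed.

Lemma mu_nu_le_leb (u v : R) (D : set R) :
  0 <= u -> Lmeasurable D -> D `<=` [set` `[u, v]] ->
  (mu_nu nu D <= (v `^ a)%:E * leb D)%E.
Proof.
move=> u0 mD Duv; rewrite /leb -integral_cst //.
apply: ge0_le_integral => //.
- by move=> y _; rewrite lee_fin powR_ge0.
- exact/measurable_fun_LebR/measurableT_comp.
move=> y /Duv; rewrite /= in_itv /= => /andP[uy yv].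
have y0 : 0 <= y by exact: le_trans uy.
by rewrite lee_fin ge0_ler_powR // nnegrE //; exact: le_trans yv.
Qed.

Lemma thick_of_mu_thick (Omega : set R) :
  Lmeasurable Omega -> mu_thick nu Omega -> thick Omega.
Proof.
move=> mO [r [L [r0 [L0 thickO]]]].
have k0 : 0 < 2 `^ a by rewrite powR_gt0.
exists (r / (2 * 2 `^ a)), (2 * L); do 2?split; [exact: divr_gt0 | lra |].
move=> x x0; set c := (x + L) `^ a; set J := [set` `[x + L, x + L + L]].
have c0 : 0 < c by rewrite powR_gt0 //; lra.
have mOJ : Lmeasurable (Omega `&` J) by exact: Lmeasurable_setI_itv.
have mu_J : ((c * L)%:E <= mu_nu nu J)%E.
  have lebJ : leb J = L%:E by rewrite leb_itv_cc; [congr (_%:E) | ]; lra.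
  rewrite EFinM -lebJ; apply: mu_nu_ge_leb (@subset_refl _ J); first lra.
  exact: Lmeasurable_itv.
have mu_OJ : (mu_nu nu (Omega `&` J) <= (2 `^ a * c)%:E * leb (Omega `&` J))%E.
  apply: le_trans (mu_nu_le_leb _ mOJ (@subIsetr _ _ _)) _; first lra.
  by rewrite lee_wpmul2r ?measure_ge0 // lee_fin ler_powR_double //; lra.
have leb_OJ : (leb (Omega `&` J) <= leb (Omega `&` [set` `[x, x + 2 * L]%R]))%E.
  apply: le_measure; rewrite ?inE; try exact: Lmeasurable_setI_itv.
  by apply: setIS; apply: itv_window_sub; exact: ltW.
rewrite (_ : _ * _ = (2 `^ a * c)^-1 * (r * (c * L))); last by field; lra.
rewrite EFinM lee_pdivrMl ?mulr_gt0 //.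
apply: le_trans _ (lee_wpmul2l _ leb_OJ); last by rewrite lee_fin mulr_ge0 // ltW.
apply: le_trans _ mu_OJ; apply: le_trans _ (thickO _ _); last lra.
by rewrite EFinM lee_wpmul2l // lee_fin ltW.
Qed.

Lemma mu_thick_of_thick (Omega : set R) :
  Lmeasurable Omega -> thick Omega -> mu_thick nu Omega.
Proof.
move=> mO [g [L [g0 [L0 thickO]]]].
have k0 : 0 < 2 `^ a by rewrite powR_gt0.
exists (g / (2 * 2 `^ a)), (2 * L); do 2?split; [exact: divr_gt0 | lra |].
move=> x x0; set c := (x + L) `^ a.
set J := [set` `[x + L, x + L + L]]; set I := [set` `[x, x + 2 * L]].
have c0 : 0 < c by rewrite powR_gt0 //; lra.
have mOJ : Lmeasurable (Omega `&` J) by exact: Lmeasurable_setI_itv.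
have mOI : Lmeasurable (Omega `&` I) by exact: Lmeasurable_setI_itv.
have mu_I : (mu_nu nu I <= (2 `^ a * c * (2 * L))%:E)%E.
  apply: le_trans (mu_nu_le_leb x0 (Lmeasurable_itv _) (@subset_refl _ I)) _.
  have lebI : leb I = (2 * L)%:E by rewrite leb_itv_cc; [congr (_%:E) | ]; lra.
  by rewrite lebI -EFinM lee_fin ler_wpM2r ?ler_powR_double //; lra.
have mu_OJ : ((c * (g * L))%:E <= mu_nu nu (Omega `&` J))%E.
  rewrite EFinM; apply: le_trans _ (mu_nu_ge_leb _ mOJ (@subIsetr _ _ _)); last lra.
  by apply: lee_wpmul2l; [rewrite lee_fin ltW | apply: thickO; lra].
have mu_OI : (mu_nu nu (Omega `&` J) <= mu_nu nu (Omega `&` I))%E.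
  by apply: le_mu_nu => //; apply: setIS; apply: itv_window_sub; exact: ltW.
apply: le_trans _ (le_trans mu_OJ mu_OI).
apply: le_trans (lee_wpmul2l _ mu_I) _; first by rewrite lee_fin ltW // divr_gt0.
by rewrite -EFinM lee_fin [leLHS](_ : _ = c * (g * L)); [exact: lexx | field; lra].
Qed.

End mu_nu_bounds.

Theorem lemma3p7 (R : realType) (Omega : set R) (nu : R) :
  Omega `<=` `[0, +oo[ -> Lmeasurable Omega -> 0 <= nu ->
  (mu_thick nu Omega <-> thick Omega).
Proof.
move=> _ mO nu0; have a_ge0 : 0 <= 2 * nu + 1 by lra.
by split; [exact: thick_of_mu_thick | exact: mu_thick_of_thick].
Qed.
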